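(* Let $\mathfrak{h}$ be a finite-dimensional Hilbert space and let $\mathcal{L}_t=\sum_{m\in\mathbb{Z}}\mathcal{L}_m e^{-\mathrm{i}m\omega t}$ be a $T$-periodic Lindbladian ($\omega=2\pi/T$) on operators on $\mathfrak{h}$, as described in the context. For every integer $N\ge 0$, let $\mathcal{L}_\mathrm{eff}=\sum_{k=0}^{N}\mathcal{L}_\mathrm{eff}^{(k)}$ be the van Vleck high-frequency expansion of the effective Liouvillian truncated at order $N$. Then $\mathrm{tr}[\mathcal{L}_\mathrm{eff}(A)]=0$ for every operator $A$ on $\mathfrak{h}$.
   Context: The Lindbladian is $\mathcal{L}_t(\rho)=-\mathrm{i}[H(t),\rho]+\sum_\alpha\big[L_\alpha(t)\rho L_\alpha^\dagger(t)-\tfrac12\{L_\alpha^\dagger(t)L_\alpha(t),\rho\}\big]$, where $H(t)=H(t+T)$ is Hermitian and the (finitely many) jump operators satisfy $L_\alpha(t+T)=L_\alpha(t)$. Writing $H(t)=\sum_m H_m e^{-\mathrm{i}m\omega t}$ and $L_\alpha(t)=\sum_m L_{\alpha,m}e^{-\mathrm{i}m\omega t}$ (so $L_\alpha^\dagger(t)=\sum_m L_{\alpha,m}^\dagger e^{\mathrm{i}m\omega t}$), the Fourier components are $\mathcal{L}_m=\mathcal{H}_m+\mathcal{D}_m$ with $\mathcal{H}_m(\rho)=-\mathrm{i}[H_m,\rho]$ and $\mathcal{D}_m(\rho)=\sum_{\alpha,n}\big[L_{\alpha,m-n}\rho L_{\alpha,n}^\dagger-\tfrac12\{L_{\alpha,n}^\dagger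 L_{\alpha,m-n},\rho\}\big]$ (all Fourier sums assumed convergent). The van Vleck high-frequency expansion is defined via the ansatz $\mathcal{V}(t,t')=e^{\mathcal{G}_t}e^{\mathcal{L}_\mathrm{eff}(t-t')}e^{-\mathcal{G}_{t'}}$ for the propagator, with $\mathcal{G}_t$ periodic, $\mathcal{L}_\mathrm{eff}=\sum_{k\ge0}\mathcal{L}_\mathrm{eff}^{(k)}$, $\mathcal{L}_\mathrm{eff}^{(k)}=O(\omega^{-k})$; it is obtained from the isolated-system van Vleck expansion by the substitution $H_m\to\mathrm{i}\mathcal{L}_m$, $H_\mathrm{eff}\to\mathrm{i}\mathcal{L}_\mathrm{eff}$. Explicitly $\mathcal{L}_\mathrm{eff}^{(0)}=\mathcal{L}_0$, $\mathrm{i}\mathcal{L}_\mathrm{eff}^{(1)}=\sum_{m\ne0}\frac{[\mathrm{i}\mathcal{L}_{-m},\mathrm{i}\mathcal{L}_m]}{2m\omega}$, $\mathrm{i}\mathcal{L}_\mathrm{eff}^{(2)}=\sum_{m\ne0}\frac{[[\mathrm{i}\mathcal{L}_{-m},\mathrm{i}\mathcal{L}_0],\mathrm{i}\mathcal{L}_m]}{2m^2\omega^2}+\sum_{m\ne0}\sum_{n\ne0,m}\frac{[[\mathrm{i}\mathcal{L}_{-m},\mathrm{i}\mathcal{L}_{m-n}],\mathrm{i}\mathcal{L}_n]}{3mn\omega^2}$, and in general each $\mathcal{L}_\mathrm{eff}^{(k)}$ with $k\ge1$ is a linear combination (with complex coefficients) of nested commutators of the superoperators $\mathcal{L}_m$.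 Commutators of superoperators are $[\mathcal{A},\mathcal{B}]=\mathcal{A}\mathcal{B}-\mathcal{B}\mathcal{A}$. *)

From HB Require Import structures.
From mathcomp Require Import all_boot all_order all_algebra.
From mathcomp Require Import all_classical all_reals all_analysis.
From mathcomp Require Import complex.

Set Implicit Arguments.
Unset Strict Implicit.
Unset Printing Implicit Defensive.

Import Order.TTheory GRing.Theory Num.Theory.
Import numFieldNormedType.Exports.
Local Open Scope ring_scope.

Section Lindblad.
Variables (R : realType) (d : nat).
Local Notation C := (R[i]).

Definition op := 'M[C]_d.
Definition superop := op -> op.

Definition adj (A : op) : op := \matrix_(i, j) conjc (A j i).

Definition scomm (A B : superop) : superop := fun X => A (B X) - B (A X).

Definition cvgC (u : nat -> C) (l : C) : Prop :=
  (((fun n => complex.Re (u n)) @ \oo --> (complex.Re l : R)) /\ ((fun n => complex.Im (u n)) @ \oo --> complex.Im l))%classic.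

Definition cvg_op (u : nat -> op) (l : op) : Prop :=
  forall i j, cvgC (fun n => u n i j) (l i j).

Definition cvg_superop (u : nat -> superop) (l : superop) : Prop :=
  forall X, cvg_op (fun n => u n X) (l X).

(* symmetric partial sums  \sum_{n=-K}^{K} f n  of a bi-infinite series over Z *)
Definition sym_psum (f : int -> op) (K : nat) : op :=
  \sum_(0 <= k < (K + K).+1) f (k%:Z - K%:Z).

(* n-th term of the series defining D_m(rho), for finitely many jump operators
   Lj a : int -> op (Fourier components L_{a,m}) *)
Definition diss_term (p : nat) (Lj : 'I_p -> int -> op) (m : int) (rho : op)
    (n : int) : op :=
  \sum_(a < p)
     (Lj a (m - n) *m rho *m adj (Lj a n)
      - (1 / 2 : C) *: (adj (Lj a n) *m Lj a (m - n) *m rho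
                        + rho *m (adj (Lj a n) *m Lj a (m - n)))).

Definition is_dissipator_comp (p : nat) (Lj : 'I_p -> int -> op)
    (D : int -> superop) : Prop :=
  forall m rho, cvg_op (sym_psum (diss_term Lj m rho)) (D m rho).

Definition Lcomp (H : int -> op) (D : int -> superop) (m : int) : superop :=
  fun rho => (- 'i%C) *: (H m *m rho - rho *m H m) + D m rho.

Inductive nested (L : int -> superop) : superop -> Prop :=
| nested_atom m : nested L (L m)
| nested_comm A B : nested L A -> nested L B -> nested L (scomm A B).

(* complex linear combinations (finite, or convergent infinite sums,
   i.e. pointwise limits) of nested commutators with at least one bracket *)
Inductive comm_comb (L : int -> superop) : superop -> Prop :=
| cc_zero : comm_comb L (fun _ => 0)
| cc_add (c : C) A B Y :
    nested L A -> nested L B -> comm_comb L Y ->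
    comm_comb L (fun X => c *: scomm A B X + Y X)
| cc_lim (u : nat -> superop) (l : superop) :
    (forall n, comm_comb L (u n)) -> cvg_superop u l -> comm_comb L l.

End Lindblad.

From HB Require Import structures.
From mathcomp Require Import all_boot all_order all_algebra.
From mathcomp Require Import all_classical all_reals all_analysis.
From mathcomp Require Import complex.
From mathcomp Require Import ring.

(* Every Fourier component L_m annihilates the trace: its Hamiltonian part is a
   commutator, and each term of the Fourier series of the dissipator has trace
   tr(L rho L^+) - tr(L^+ L rho) = 0 by cyclicity, a property that survives the
   limit since the trace is a finite sum of entries.  Superoperators S with
   tr (S X) = 0 for all X are closed under commutators, linear combinations and
   pointwise limits, so every van Vleck term, hence every truncation of L_eff,
   annihilates the trace. *)

Import Order.TTheory GRing.Theory Num.Theory.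
Import numFieldNormedType.Exports.
Set Implicit Arguments.
Unset Strict Implicit.
Local Open Scope ring_scope.
Local Open Scope classical_set_scope.

Section ComplexLimits.
Variable R : realType.

Lemma Re_sum n (f : 'I_n -> R[i]) :
  complex.Re (\sum_(i < n) f i) = \sum_(i < n) complex.Re (f i).
Proof. exact: (raddf_sum (@complex.Re R : Rcomplex R -> R)). Qed.

Lemma Im_sum n (f : 'I_n -> R[i]) :
  complex.Im (\sum_(i < n) f i) = \sum_(i < n) complex.Im (f i).
Proof. exact: (raddf_sum (@complex.Im R : Rcomplex R -> R)). Qed.

Lemma cvgC_sum n (u : nat -> 'I_n -> R[i]) (l : 'I_n -> R[i]) :
  (forall i, cvgC (u^~ i) (l i)) ->
  cvgC (fun k => \sum_(i < n) u k i) (\sum_(i < n) l i).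
Proof.
move=> ul; split; rewrite ?Re_sum ?Im_sum.
- under eq_cvg do rewrite Re_sum.
  by apply: cvg_big => [|i _]; [exact: add_continuous | case: (ul i)].
- under eq_cvg do rewrite Im_sum.
  by apply: cvg_big => [|i _]; [exact: add_continuous | case: (ul i)].
Qed.

Lemma cvgC_cst_uniq (a l : R[i]) : cvgC (fun=> a) l -> l = a.
Proof.
have cst_lim (x y : R) : (fun=> x) @ \oo --> y -> y = x.
  by move=> xy; exact: cvg_unique _ xy (cvg_cst _).
by case: a l => ? ? [? ?] [/cst_lim /= -> /cst_lim ->].
Qed.

End ComplexLimits.

Section TraceAnnihilating.
Variables (R : realType) (d : nat).

Definition trace_annihilating (S : superop R d) := forall X, \tr (S X) = 0.

Lemma mxtrace_cvg (u : nat -> op R d) (l : op R d) :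
  cvg_op u l -> cvgC (fun k => \tr (u k)) (\tr l).
Proof. by move=> ul; apply: cvgC_sum => i; exact: ul. Qed.

Lemma mxtrace_lim_eq0 (u : nat -> op R d) (l : op R d) :
  cvg_op u l -> (forall k, \tr (u k) = 0) -> \tr l = 0.
Proof.
move=> /mxtrace_cvg ul tr_u0; apply: cvgC_cst_uniq.
by rewrite -(funext tr_u0).
Qed.

Lemma trace_annihilating_scomm (A B : superop R d) :
  trace_annihilating A -> trace_annihilating B ->
  trace_annihilating (scomm A B).
Proof. by move=> trA trB X; rewrite /scomm raddfB /= trA trB subrr. Qed.

Lemma trace_annihilating_lim (u : nat -> superop R d) (l : superop R d) :
  cvg_superop u l -> (forall n, trace_annihilating (u n)) ->
  trace_annihilating l.
Proof. by move=> ul tr_u X; apply: (mxtrace_lim_eq0 (ul X)) => n; exact: tr_u. Qed.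

Variable L : int -> superop R d.
Hypothesis trL : forall m, trace_annihilating (L m).

Lemma trace_annihilating_nested S : nested L S -> trace_annihilating S.
Proof. by elim=> [m|A B _ trA _ trB]; [exact: trL | exact: trace_annihilating_scomm]. Qed.

Lemma trace_annihilating_comm_comb S : comm_comb L S -> trace_annihilating S.
Proof.
elim=> [|c A B Y nA nB _ trY|u l _ tr_u ul] X.
- exact: mxtrace0.
- rewrite mxtraceD mxtraceZ trY addr0.
  by rewrite (trace_annihilating_nested (nested_comm nA nB)) mulr0.
- exact: trace_annihilating_lim ul tr_u X.
Qed.

End TraceAnnihilating.

Section LindbladComponents.
Variables (R : realType) (d p : nat).
Variables (H : int -> op R d) (Lj : 'I_p -> int -> op R d).

Lemma mxtrace_diss_term m rho n : \tr (diss_term Lj m rho n) = 0.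
Proof.
rewrite /diss_term raddf_sum /=; apply: big1 => a _.
rewrite raddfB /= mxtraceZ mxtraceD [X in X - _]mxtrace_mulC.
rewrite [X in _ * (_ + X)]mxtrace_mulC !mulmxA.
have two_neq0 : (2 : R[i]) != 0 by rewrite pnatr_eq0.
by field.
Qed.

Lemma trace_annihilating_Lcomp (D : int -> superop R d) m :
  is_dissipator_comp Lj D -> trace_annihilating (Lcomp H D m).
Proof.
move=> hD X; rewrite /Lcomp mxtraceD mxtraceZ raddfB /= mxtrace_mulC subrr.
rewrite mulr0 add0r; apply: (mxtrace_lim_eq0 (hD m X)) => K.
by rewrite /sym_psum raddf_sum; apply: big1 => k _; exact: mxtrace_diss_term.
Qed.

End LindbladComponents.

Unset Implicit Arguments.
Theorem lemma1 (R : realType) (d p : nat)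
  (H : int -> op R d) (Lj : 'I_p -> int -> op R d) (D : int -> superop R d)
  (hHerm : forall m : int, H (- m) = adj (H m))
  (hD : is_dissipator_comp Lj D)
  (Leff : nat -> superop R d)
  (hLeff0 : Leff 0%N = Lcomp H D 0)
  (hLeffk : forall k : nat, (0 < k)%N -> comm_comb (Lcomp H D) (Leff k))
  (N : nat) (A : op R d) :
  \tr (\sum_(k < N.+1) Leff k A) = 0.
Proof.
have trL m : trace_annihilating (Lcomp H D m) := trace_annihilating_Lcomp H m hD.
rewrite raddf_sum; apply: big1 => -[[|k] _] _ /=.
  by rewrite hLeff0; exact: trL.
exact: trace_annihilating_comm_comb trL _ (hLeffk k.+1 isT) A.
Qed.
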